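(* Let $\nu,a,b\in\mathbb{R}$ with $0<b+\nu<(a+\nu)/4$. Let $u^*$ be the unique solution in $b<u<a$ of $\lambda_2(a,u,b)=\lambda_3(a,u,b)$, and put $\alpha=\lambda_2(a,u^*,b)$. Then the equation $x/t=\lambda_2(a,u_2,b)$ can be inverted to give $u_2\in[u^*,a]$ as an increasing function of $x/t$ on the interval $\alpha\le x/t\le 2a+b+2\nu$.
   Context: For $-\nu<u_3<u_2<u_1$ define $$I(u_1,u_2,u_3)=\int_{u_3}^{u_2}\frac{\eta+\nu}{\sqrt{(\eta+\nu)(u_1-\eta)(u_2-\eta)(\eta-u_3)}}\,d\eta,$$ and for $i=1,2,3$ $$\lambda_i=u_1+u_2+u_3+2\nu-\frac{I}{\partial I/\partial u_i}.$$ These functions extend continuously to $u_1=u_2>u_3$, where $\lambda_2=2u_1+u_3+2\nu$. *)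

From Stdlib Require Import Reals.
From Coquelicot Require Import Coquelicot.
Open Scope R_scope.

Definition integrand (nu u1 u2 u3 eta : R) : R :=
  (eta + nu) / sqrt ((eta + nu) * (u1 - eta) * (u2 - eta) * (eta - u3)).

Definition Ifun (nu u1 u2 u3 : R) : R :=
  RInt_gen (integrand nu u1 u2 u3) (at_right u3) (at_left u2).

Definition dI1 (nu u1 u2 u3 : R) : R := Derive (fun v => Ifun nu v u2 u3) u1.
Definition dI2 (nu u1 u2 u3 : R) : R := Derive (fun v => Ifun nu u1 v u3) u2.
Definition dI3 (nu u1 u2 u3 : R) : R := Derive (fun v => Ifun nu u1 u2 v) u3.

Definition lambda1 (nu u1 u2 u3 : R) : R :=
  u1 + u2 + u3 + 2 * nu - Ifun nu u1 u2 u3 / dI1 nu u1 u2 u3.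
Definition lambda2 (nu u1 u2 u3 : R) : R :=
  u1 + u2 + u3 + 2 * nu - Ifun nu u1 u2 u3 / dI2 nu u1 u2 u3.
Definition lambda3 (nu u1 u2 u3 : R) : R :=
  u1 + u2 + u3 + 2 * nu - Ifun nu u1 u2 u3 / dI3 nu u1 u2 u3.

(* lambda_2 continuously extended to u1 = u2 > u3, where it equals 2u1+u3+2nu. *)
Definition lambda2e (nu u1 u2 u3 : R) : R :=
  if Req_EM_T u2 u1 then 2 * u1 + u3 + 2 * nu else lambda2 nu u1 u2 u3.

From Stdlib Require Import Reals Lra Psatz ClassicalEpsilon.
From Coquelicot Require Import Coquelicot.
Open Scope R_scope.

(* Write [u1 = a], [u2 = u], [u3 = b]. The substitution [eta = b + (u - b) sin^2 t] removes both
   endpoint singularities of [I]: [I = J := int_0^(PI/2) 2 F0 (eta)] with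
   [F0 x = sqrt (x + nu) / sqrt (a - x)]. Differentiating under the integral sign, [dI/du = J2] and
   [dI/db = J3] are the integrals of [F1 = F0'] against [2 sin^2] and [2 cos^2]; so
   [lambda2 = Lam u := a + u + b + 2 nu - J / J2], [Lam' = J J22 / J2^2] with [J22 = dJ2/du], and
   [lambda2 = lambda3] iff [J2 = J3].
   Integration by parts gives [J2 - J3 = 4 (u - b) int F2 (eta) sin^2 cos^2] with [F2 = F1'], and
   since [F2] changes sign once, from negative to positive at [(a + nu) / 4 - nu > b], a nonnegative
   right-hand side forces [J22 > 0]. As [u -> a], [J2] grows like [1 / (a - u)] while [J3] and [J]
   are [O((a - u)^(-1/2))]; hence [J2 > J3] near [a], and by the intermediate value theorem and the
   uniqueness of [u*], [J2 >= J3] on [[u*, a)]. There [Lam] is strictly increasing, and it tends to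
   [2 a + b + 2 nu] at [a], which is the value of the continuous extension of [lambda2]. *)

Ltac ring_R := match goal with |- ?x = ?y => change (@eq R x y) end; ring.

Lemma is_derive_replace (f : R -> R) x l l' : is_derive f x l -> l = l' -> is_derive f x l'.
Proof. intros H <-; exact H. Qed.

Ltac fold_minus :=
  repeat match goal with |- context [?a + - ?x] => replace (a + - x) with (a - x) by ring end.

Lemma ex_derive_continuous_R (f : R -> R) x : ex_derive f x -> continuous f x.
Proof. apply (ex_derive_continuous (K := R_AbsRing) (V := R_NormedModule)). Qed.

Lemma is_derive_continuous (f : R -> R) x l : is_derive f x l -> continuous f x.
Proof. intros H. apply ex_derive_continuous_R. exists l; exact H. Qed.

Lemma is_derive_continuity_pt (f : R -> R) x l : is_derive f x l -> continuity_pt f x.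
Proof. intros H. apply continuity_pt_filterlim. eapply is_derive_continuous; eauto. Qed.

Lemma continuous_Rmult (f g : R -> R) t :
  continuous f t -> continuous g t -> continuous (fun t => f t * g t) t.
Proof. exact (@continuous_mult R_UniformSpace R_AbsRing f g t). Qed.

Lemma continuous_Rplus (f g : R -> R) t :
  continuous f t -> continuous g t -> continuous (fun t => f t + g t) t.
Proof. exact (@continuous_plus R_UniformSpace R_AbsRing R_NormedModule f g t). Qed.

Lemma continuous_Rconst (c t : R) : continuous (fun _ => c) t.
Proof. apply continuous_const. Qed.

Lemma ex_RInt_continuous_R (f : R -> R) a b : (forall t, continuous f t) -> ex_RInt f a b.
Proof. intros H. apply (ex_RInt_continuous (V := R_CompleteNormedModule)). intros; apply H. Qed.

Lemma RInt_lincomb (f g : R -> R) al be a b : ex_RInt f a b -> ex_RInt g a b ->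
  RInt (fun t => al * f t + be * g t) a b = al * RInt f a b + be * RInt g a b.
Proof.
  intros Hf Hg. apply is_RInt_unique.
  apply (RInt_correct (V := R_CompleteNormedModule)) in Hf.
  apply (RInt_correct (V := R_CompleteNormedModule)) in Hg.
  exact (is_RInt_plus _ _ _ _ _ _ (is_RInt_scal _ _ _ al _ Hf) (is_RInt_scal _ _ _ be _ Hg)).
Qed.

Lemma RInt_Chasles_R (f : R -> R) a b c :
  ex_RInt f a b -> ex_RInt f b c -> RInt f a b + RInt f b c = RInt f a c.
Proof. apply (RInt_Chasles (V := R_CompleteNormedModule)). Qed.

Lemma RInt_le_const (f : R -> R) a b c : a <= b -> ex_RInt f a b ->
  (forall t, a < t < b -> f t <= c) -> RInt f a b <= (b - a) * c.
Proof.
  intros hab hf H. eapply Rle_trans. apply RInt_le with (g := fun _ => c); auto.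
  apply (ex_RInt_const (V := R_CompleteNormedModule)).
  right. rewrite (RInt_const (V := R_CompleteNormedModule)). reflexivity.
Qed.

Lemma RInt_ge_const (f : R -> R) a b c : a <= b -> ex_RInt f a b ->
  (forall t, a < t < b -> c <= f t) -> (b - a) * c <= RInt f a b.
Proof.
  intros hab hf H. eapply Rle_trans. 2: apply RInt_le with (f := fun _ => c); auto.
  right. rewrite (RInt_const (V := R_CompleteNormedModule)). reflexivity.
  apply (ex_RInt_const (V := R_CompleteNormedModule)).
Qed.

Lemma RInt_Rscal (f : R -> R) l a b : ex_RInt f a b -> RInt (fun t => l * f t) a b = l * RInt f a b.
Proof. apply (RInt_scal (V := R_CompleteNormedModule)). Qed.

Lemma RInt_gt_0_of_tail (g : R -> R) a c b : a <= c < b ->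
  (forall t, continuous g t) -> (forall t, a < t < b -> 0 <= g t) -> (forall t, c < t < b -> 0 < g t) ->
  0 < RInt g a b.
Proof.
  intros Hc Hg H0 H1. rewrite <- (RInt_Chasles_R g a c b) by (apply ex_RInt_continuous_R; auto).
  assert (0 <= RInt g a c).
  { apply RInt_ge_0; [lra | apply ex_RInt_continuous_R; auto | intros; apply H0; lra]. }
  assert (0 < RInt g c b) by (apply RInt_gt_0; auto; lra).
  lra.
Qed.

Lemma Rdiv_le_cross p q r s : 0 < q -> 0 < s -> p * s <= r * q -> p / q <= r / s.
Proof.
  intros hq hs H. apply Rmult_le_reg_r with (q * s). nra.
  replace (p / q * (q * s)) with (p * s) by (field; lra).
  replace (r / s * (q * s)) with (r * q) by (field; lra). exact H.
Qed.

Lemma locally_open_interval (x lo hi : R) : lo < x < hi -> locally x (fun y => lo < y < hi).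
Proof.
  intros H. assert (Hr : 0 < Rmin (x - lo) (hi - x)) by (apply Rmin_glb_lt; lra).
  exists (mkposreal _ Hr). intros y Hy. change (Rabs (y - x) < Rmin (x - lo) (hi - x)) in Hy.
  assert (m1 := Rmin_l (x - lo) (hi - x)). assert (m2 := Rmin_r (x - lo) (hi - x)).
  apply Rabs_lt_between in Hy. lra.
Qed.

Lemma asin_in_0_PI2 w : 0 < w < 1 -> 0 < asin w < PI / 2.
Proof.
  intros Hw. assert (H := asin_bound_lt w ltac:(lra)). split; [|lra].
  destruct (Rle_lt_dec (asin w) 0) as [Hle|]; [|lra].
  assert (sin (asin w) <= 0).
  { destruct (Req_dec (asin w) 0) as [E|E]; [rewrite E, sin_0; lra|].
    assert (sin (- asin w) > 0) by (apply sin_gt_0; [lra | pose proof PI_RGT_0; lra]).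
    rewrite sin_neg in H0. lra. }
  rewrite sin_asin in H0; lra.
Qed.

Lemma sqrt_in_0_1 z : 0 < z < 1 -> 0 < sqrt z < 1.
Proof. intros. split; [apply sqrt_lt_R0; lra | rewrite <- sqrt_1; apply sqrt_lt_1; lra]. Qed.

Lemma asin_sqrt_small e : 0 < e -> exists d, 0 < d /\ forall z, 0 <= z < d -> z < 1 -> asin (sqrt z) < e.
Proof.
  intros He.
  assert (Hc : continuity_pt (comp asin sqrt) 0).
  { apply continuity_pt_comp; [apply continuity_pt_sqrt; lra|].
    apply derivable_continuous_pt. rewrite sqrt_0. apply derivable_pt_asin. lra. }
  destruct (Hc e He) as [al [Hal Hal2]].
  exists al. split; [lra|]. intros z [z0 z1] z2.
  destruct (Req_dec z 0) as [E|E]; [subst z; rewrite sqrt_0, asin_0; lra|].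
  specialize (Hal2 z). simpl in Hal2. unfold R_dist, comp in Hal2.
  rewrite sqrt_0, asin_0, !Rminus_0_r in Hal2.
  assert (Hd : Rabs (asin (sqrt z)) < e)
    by (apply Hal2; split; [split; [exact I | auto] | rewrite Rabs_pos_eq; lra]).
  apply Rabs_lt_between in Hd. lra.
Qed.

Lemma increasing_onto_inverse (f : R -> R) (p q lo hi : R) :
  (forall x y, p <= x -> x < y -> y <= q -> f x < f y) ->
  (forall y, lo <= y <= hi -> exists x, p <= x <= q /\ f x = y) ->
  exists g : R -> R,
    (forall y, lo <= y <= hi ->
       p <= g y <= q /\ f (g y) = y /\ (forall x, p <= x <= q -> f x = y -> x = g y)) /\
    (forall y1 y2, lo <= y1 -> y1 < y2 -> y2 <= hi -> g y1 < g y2).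
Proof.
  intros Hinc Honto.
  set (P := fun y x => p <= x <= q /\ f x = y).
  assert (Spec : forall y, lo <= y <= hi -> P y (epsilon (inhabits 0) (P y)))
    by (intros y Hy; apply epsilon_spec, Honto, Hy).
  assert (Inj : forall x1 x2, p <= x1 <= q -> p <= x2 <= q -> f x1 = f x2 -> x1 = x2).
  { intros x1 x2 h1 h2 E. destruct (Rtotal_order x1 x2) as [H|[H|H]]; auto.
    - assert (X := Hinc x1 x2 ltac:(lra) H ltac:(lra)). lra.
    - assert (X := Hinc x2 x1 ltac:(lra) H ltac:(lra)). lra. }
  exists (fun y => epsilon (inhabits 0) (P y)). split.
  - intros y Hy. destruct (Spec y Hy) as [S1 S2]. split; [|split]; auto.
    intros x Hx E. apply Inj; auto. congruence.
  - intros y1 y2 h1 h12 h2.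
    destruct (Spec y1 ltac:(lra)) as [S1 S2]. destruct (Spec y2 ltac:(lra)) as [T1 T2].
    set (x1 := epsilon (inhabits 0) (P y1)) in *. set (x2 := epsilon (inhabits 0) (P y2)) in *.
    destruct (Rlt_le_dec x1 x2) as [H|H]; auto.
    destruct (Req_dec x1 x2) as [E|E]; [rewrite E in S2; lra|].
    assert (X := Hinc x2 x1 ltac:(lra) ltac:(lra) ltac:(lra)). lra.
Qed.

Lemma affine_comb_in_interval (lo hi m z k : R) : lo < m < hi -> lo < z < hi -> 0 <= k <= 1 ->
  lo < m + (z - m) * k < hi.
Proof.
  intros H1 H2 [k0 k1]. destruct (Rle_lt_dec m z).
  - assert (0 <= (z - m) * k) by nra. assert ((z - m) * k <= z - m) by nra. lra.
  - assert ((z - m) * k <= 0) by nra. assert (z - m <= (z - m) * k) by nra. lra.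
Qed.

Lemma is_derive_affine_param (h : R -> R) dh w k m z :
  is_derive h (m + (z - m) * k) dh ->
  is_derive (fun u => h (m + (u - m) * k) * w) z (dh * k * w).
Proof.
  intros Hh.
  assert (Hi : is_derive (fun u => m + (u - m) * k) z k) by (auto_derive; [exact I | ring]).
  assert (H := is_derive_scal_l _ _ _ w (is_derive_comp h _ z _ _ Hh Hi)).
  replace (dh * k * w) with (scal (scal k dh) w)
    by (change (k * dh * w = dh * k * w); ring).
  exact H.
Qed.

Lemma continuity_2d_pt_snd (K : R -> R) x t :
  continuous K t -> continuity_2d_pt (fun _ v => K v) x t.
Proof.
  intros HK. apply (continuity_1d_2d_pt_comp K (fun _ v => v)).
  apply continuity_pt_filterlim; exact HK. apply continuity_2d_pt_id2.
Qed.

(* The affine form [m + (z - m) K t] with [0 <= K <= 1] keeps the argument of [h] in [(lo, hi)]. *)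
Lemma is_derive_RInt_affine_param (h dh w K : R -> R) (lo hi m z0 p q : R) :
  lo < m < hi -> lo < z0 < hi ->
  (forall y, lo < y < hi -> is_derive h y (dh y)) ->
  (forall y, lo < y < hi -> continuous dh y) ->
  (forall t, continuous w t) -> (forall t, continuous K t) -> (forall t, 0 <= K t <= 1) ->
  is_derive (fun z => RInt (fun t => h (m + (z - m) * K t) * w t) p q) z0
    (RInt (fun t => dh (m + (z0 - m) * K t) * K t * w t) p q).
Proof.
  intros Hm Hz Hd Hdc Hw HK HK1.
  assert (Hin : forall z t, lo < z < hi -> lo < m + (z - m) * K t < hi)
    by (intros; apply affine_comb_in_interval; auto).
  assert (HD : forall z t, lo < z < hi ->
    is_derive (fun u => h (m + (u - m) * K t) * w t) z (dh (m + (z - m) * K t) * K t * w t))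
    by (intros; apply is_derive_affine_param, Hd, Hin; auto).
  assert (HDer : forall z t, lo < z < hi ->
    Derive (fun u => h (m + (u - m) * K t) * w t) z = dh (m + (z - m) * K t) * K t * w t)
    by (intros; apply is_derive_unique, HD; auto).
  assert (Hloc := locally_open_interval z0 lo hi Hz).
  rewrite <- (RInt_ext (fun t => Derive (fun u => h (m + (u - m) * K t) * w t) z0))
    by (intros; apply HDer; auto).
  apply (is_derive_RInt_param (fun u t => h (m + (u - m) * K t) * w t)).
  - eapply filter_imp; [|exact Hloc]. intros z Hzz t _. eexists. apply HD; exact Hzz.
  - intros t _.
    apply continuity_2d_pt_ext_loc with (f := fun u v => dh (m + (u - m) * K v) * K v * w v).
    { destruct Hloc as [r Hr]. exists r. intros u v Hu _. symmetry. apply HDer, Hr, Hu. }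
    apply continuity_2d_pt_mult; [apply continuity_2d_pt_mult|]; try apply continuity_2d_pt_snd; auto.
    apply (continuity_1d_2d_pt_comp dh (fun u v => m + (u - m) * K v)).
    + apply continuity_pt_filterlim, Hdc, Hin, Hz.
    + apply continuity_2d_pt_plus; [apply continuity_2d_pt_const|].
      apply continuity_2d_pt_mult; [|apply continuity_2d_pt_snd; auto].
      apply continuity_2d_pt_minus; [apply continuity_2d_pt_id1 | apply continuity_2d_pt_const].
  - eapply filter_imp; [|exact Hloc]. intros z Hzz. apply ex_RInt_continuous_R. intros t.
    apply continuous_Rmult; auto.
    apply continuous_comp with (g := h).
    + apply continuous_Rplus; [apply continuous_Rconst|].
      apply continuous_Rmult; [apply continuous_Rconst | auto].
    + eapply is_derive_continuous, Hd, Hin, Hzz.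
Qed.

(** * The substitution [eta] *)

Definition sinsq (t : R) := sin t ^ 2.
Definition cossq (t : R) := cos t ^ 2.

Lemma sinsq_plus_cossq t : sinsq t + cossq t = 1.
Proof. unfold sinsq, cossq. rewrite <- (sin2_cos2 t). unfold Rsqr; ring. Qed.

Lemma sinsq_bound t : 0 <= sinsq t <= 1.
Proof. assert (H := sinsq_plus_cossq t). unfold sinsq, cossq in *. split; nra. Qed.

Lemma cossq_bound t : 0 <= cossq t <= 1.
Proof. assert (H := sinsq_plus_cossq t). unfold sinsq, cossq in *. split; nra. Qed.

Lemma sinsq_cossq_pos t : 0 < t < PI / 2 -> 0 < sinsq t /\ 0 < cossq t.
Proof.
  intros. assert (0 < sin t) by (apply sin_gt_0; lra). assert (0 < cos t) by (apply cos_gt_0; lra).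
  unfold sinsq, cossq. split; nra.
Qed.

Lemma sinsq_increasing t1 t2 : 0 <= t1 -> t1 < t2 -> t2 <= PI / 2 -> sinsq t1 < sinsq t2.
Proof.
  intros. assert (0 <= sin t1) by (apply sin_ge_0; lra).
  assert (sin t1 < sin t2) by (apply sin_increasing_1; lra).
  unfold sinsq. nra.
Qed.

Lemma sinsq_ge_half t : PI / 4 <= t <= PI / 2 -> 1 / 2 <= sinsq t.
Proof.
  intros Ht. pose proof PI_RGT_0.
  assert (Hs := sin_incr_1 (PI / 4) t ltac:(lra) ltac:(lra) ltac:(lra) ltac:(lra) ltac:(lra)).
  rewrite sin_PI4 in Hs. unfold sinsq.
  assert (s2 := sqrt_lt_R0 2 ltac:(lra)). assert (s22 : sqrt 2 * sqrt 2 = 2) by (apply sqrt_sqrt; lra).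
  assert (0 < 1 / sqrt 2) by (apply Rdiv_lt_0_compat; lra).
  assert (X2 : (1 / sqrt 2) * (1 / sqrt 2) = 1 / 2) by (rewrite <- s22 at 3; field; lra).
  simpl. nra.
Qed.

Lemma cossq_le_sq_dist_PI2 t : 0 <= t < PI / 2 -> cossq t <= (PI / 2 - t) * (PI / 2 - t).
Proof.
  intros Ht. unfold cossq. rewrite <- sin_shift.
  assert (0 <= sin (PI / 2 - t)) by (apply sin_ge_0; lra).
  assert (sin (PI / 2 - t) < PI / 2 - t) by (apply sin_lt_x; lra).
  simpl. nra.
Qed.

Lemma continuous_sinsq t : continuous sinsq t.
Proof. apply ex_derive_continuous_R. unfold sinsq. auto_derive. exact I. Qed.

Lemma continuous_cossq t : continuous cossq t.
Proof. apply ex_derive_continuous_R. unfold cossq. auto_derive. exact I. Qed.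

(* What is left of the integrand of [I] after the substitution [eta] below. *)
Definition F0 (nu a x : R) := sqrt (x + nu) / sqrt (a - x).
Definition F1 (nu a x : R) := (a + nu) / (2 * sqrt (x + nu) * sqrt (a - x) * (a - x)).
Definition F2 (nu a x : R) :=
  (a + nu) * (4 * (x + nu) - (a + nu)) /
  (4 * (x + nu) * ((a - x) * (a - x)) * sqrt (x + nu) * sqrt (a - x)).

Section Densities.

Variables nu a x : R.
Hypothesis Hx : -nu < x < a.

Let p1 : 0 < x + nu. Proof. lra. Qed.
Let p2 : 0 < a - x. Proof. lra. Qed.
Let s1 : 0 < sqrt (x + nu). Proof. apply sqrt_lt_R0, p1. Qed.
Let s2 : 0 < sqrt (a - x). Proof. apply sqrt_lt_R0, p2. Qed.
Let e1 : sqrt (x + nu) * sqrt (x + nu) = x + nu. Proof. apply sqrt_sqrt; lra. Qed.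
Let e2 : sqrt (a - x) * sqrt (a - x) = a - x. Proof. apply sqrt_sqrt; lra. Qed.

Lemma is_derive_F0 : is_derive (F0 nu a) x (F1 nu a x).
Proof.
  unfold F0, F1. auto_derive; fold_minus; [repeat split; lra|].
  assert (E1 := e1). assert (E2 := e2).
  set (q1 := sqrt (x + nu)) in *. set (q2 := sqrt (a - x)) in *.
  replace (a + nu) with (q1 * q1 + q2 * q2) by lra. rewrite <- E2. field. lra.
Qed.

Lemma is_derive_F1 : is_derive (F1 nu a) x (F2 nu a x).
Proof.
  unfold F1, F2. auto_derive; fold_minus.
  { repeat split; try lra. apply Rgt_not_eq. repeat apply Rmult_lt_0_compat; lra. }
  assert (E1 := e1). assert (E2 := e2).
  set (q1 := sqrt (x + nu)) in *. set (q2 := sqrt (a - x)) in *.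
  replace (x + nu) with (q1 * q1) by lra. replace (a - x) with (q2 * q2) by lra.
  replace (a + nu) with (q1 * q1 + q2 * q2) by lra. field. lra.
Qed.

Lemma ex_derive_F2 : ex_derive (F2 nu a) x.
Proof.
  unfold F2. auto_derive. fold_minus. repeat split; try lra.
  apply Rgt_not_eq. repeat apply Rmult_lt_0_compat; lra.
Qed.

Lemma F0_pos : 0 < F0 nu a x.
Proof. unfold F0. apply Rdiv_lt_0_compat; lra. Qed.

Lemma F1_pos : 0 < F1 nu a x.
Proof. unfold F1. apply Rdiv_lt_0_compat; [lra | repeat apply Rmult_lt_0_compat; lra]. Qed.

Lemma F0_eq_F1 : F0 nu a x = F1 nu a x * (2 * (x + nu) * (a - x) / (a + nu)).
Proof.
  unfold F0, F1. assert (E1 := e1). set (q1 := sqrt (x + nu)) in *.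
  rewrite <- E1. field. repeat split; lra.
Qed.

Lemma F2_factor : exists c, 0 < c /\ F2 nu a x = (x - ((a + nu) / 4 - nu)) * c.
Proof.
  exists (4 * (a + nu) / (4 * (x + nu) * ((a - x) * (a - x)) * sqrt (x + nu) * sqrt (a - x))).
  split; [apply Rdiv_lt_0_compat; [lra | repeat apply Rmult_lt_0_compat; lra]|].
  unfold F2. field. repeat split; lra.
Qed.

End Densities.

Lemma continuous_F0 nu a y : -nu < y < a -> continuous (F0 nu a) y.
Proof. intros H. eapply is_derive_continuous, is_derive_F0, H. Qed.

Lemma continuous_F1 nu a y : -nu < y < a -> continuous (F1 nu a) y.
Proof. intros H. eapply is_derive_continuous, is_derive_F1, H. Qed.

Lemma continuous_F2 nu a y : -nu < y < a -> continuous (F2 nu a) y.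
Proof. intros H. apply ex_derive_continuous_R, ex_derive_F2, H. Qed.

(* The substitution [eta = u3 + (u2 - u3) sin^2 t] of the paper, with [u = u2] and [v = u3]. *)
Definition eta (u v t : R) := v + (u - v) * sinsq t.

Lemma eta_cossq u v t : eta u v t = u + (v - u) * cossq t.
Proof. unfold eta. assert (H := sinsq_plus_cossq t). replace (sinsq t) with (1 - cossq t) by lra. ring. Qed.

Lemma eta_bounds u v t : v <= u -> v <= eta u v t <= u.
Proof. intros. assert (Hs := sinsq_bound t). unfold eta. split; nra. Qed.

Lemma is_derive_eta u v t : is_derive (eta u v) t ((u - v) * (2 * sin t * cos t)).
Proof. unfold eta, sinsq. auto_derive; [exact I | ring]. Qed.

Lemma continuous_comp_eta (f : R -> R) u v t : v <= u ->
  (forall y, v <= y <= u -> continuous f y) -> continuous (fun t => f (eta u v t)) t.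
Proof.
  intros Huv Hf. apply continuous_comp with (g := f).
  - eapply is_derive_continuous, is_derive_eta.
  - apply Hf, eta_bounds, Huv.
Qed.

Definition Jint (nu a u v t : R) := F0 nu a (eta u v t) * 2.
Definition J (nu a u v : R) : R := RInt (Jint nu a u v) 0 (PI / 2).
Definition J2 (nu a u v : R) : R := RInt (fun t => F1 nu a (eta u v t) * (2 * sinsq t)) 0 (PI / 2).
Definition J3 (nu a u v : R) : R := RInt (fun t => F1 nu a (eta u v t) * (2 * cossq t)) 0 (PI / 2).
Definition J22 (nu a u v : R) : R :=
  RInt (fun t => F2 nu a (eta u v t) * (2 * sinsq t * sinsq t)) 0 (PI / 2).
Definition Jsc (nu a u v : R) : R := RInt (fun t => F2 nu a (eta u v t) * (sinsq t * cossq t)) 0 (PI / 2).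

Section Integrands.

Variables nu a u v : R.
Hypotheses (Hv : -nu < v) (Hvu : v < u) (Hu : u < a).

Lemma continuous_F0_eta t : continuous (fun t => F0 nu a (eta u v t)) t.
Proof. apply continuous_comp_eta; [lra|]. intros; apply continuous_F0; lra. Qed.

Lemma continuous_F1_eta t : continuous (fun t => F1 nu a (eta u v t)) t.
Proof. apply continuous_comp_eta; [lra|]. intros; apply continuous_F1; lra. Qed.

Lemma continuous_F2_eta t : continuous (fun t => F2 nu a (eta u v t)) t.
Proof. apply continuous_comp_eta; [lra|]. intros; apply continuous_F2; lra. Qed.

Lemma continuous_Jint t : continuous (Jint nu a u v) t.
Proof. apply continuous_Rmult; [apply continuous_F0_eta | apply continuous_Rconst]. Qed.

Lemma ex_RInt_F1_eta_sinsq p q : ex_RInt (fun t => F1 nu a (eta u v t) * (2 * sinsq t)) p q.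
Proof.
  apply ex_RInt_continuous_R. intros t. apply continuous_Rmult; [apply continuous_F1_eta|].
  apply continuous_Rmult; [apply continuous_Rconst | apply continuous_sinsq].
Qed.

Lemma ex_RInt_F1_eta_cossq p q : ex_RInt (fun t => F1 nu a (eta u v t) * (2 * cossq t)) p q.
Proof.
  apply ex_RInt_continuous_R. intros t. apply continuous_Rmult; [apply continuous_F1_eta|].
  apply continuous_Rmult; [apply continuous_Rconst | apply continuous_cossq].
Qed.

Lemma ex_RInt_F2_eta_sinsq_cossq p q : ex_RInt (fun t => F2 nu a (eta u v t) * (sinsq t * cossq t)) p q.
Proof.
  apply ex_RInt_continuous_R. intros t. apply continuous_Rmult; [apply continuous_F2_eta|].
  apply continuous_Rmult; [apply continuous_sinsq | apply continuous_cossq].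
Qed.

Lemma J_pos : 0 < J nu a u v.
Proof.
  pose proof PI_RGT_0. apply RInt_gt_0; [lra| |intros; apply continuous_Jint].
  intros t _. assert (He := eta_bounds u v t ltac:(lra)). unfold Jint.
  assert (0 < F0 nu a (eta u v t)) by (apply F0_pos; lra). lra.
Qed.

Lemma J2_pos : 0 < J2 nu a u v.
Proof.
  pose proof PI_RGT_0. apply RInt_gt_0; [lra| |].
  - intros t Ht. assert (He := eta_bounds u v t ltac:(lra)). destruct (sinsq_cossq_pos t Ht).
    assert (0 < F1 nu a (eta u v t)) by (apply F1_pos; lra). nra.
  - intros t _. apply continuous_Rmult; [apply continuous_F1_eta|].
    apply continuous_Rmult; [apply continuous_Rconst | apply continuous_sinsq].
Qed.

Lemma J3_pos : 0 < J3 nu a u v.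
Proof.
  pose proof PI_RGT_0. apply RInt_gt_0; [lra| |].
  - intros t Ht. assert (He := eta_bounds u v t ltac:(lra)). destruct (sinsq_cossq_pos t Ht).
    assert (0 < F1 nu a (eta u v t)) by (apply F1_pos; lra). nra.
  - intros t _. apply continuous_Rmult; [apply continuous_F1_eta|].
    apply continuous_Rmult; [apply continuous_Rconst | apply continuous_cossq].
Qed.

End Integrands.

Section Derivatives.

Variables nu a u v : R.
Hypotheses (Hu : -nu < u < a) (Hv : -nu < v < a).

Lemma is_derive_J_u : is_derive (fun z => J nu a z v) u (J2 nu a u v).
Proof.
  unfold J, Jint, J2, eta.
  rewrite <- (RInt_ext (fun t => F1 nu a (v + (u - v) * sinsq t) * sinsq t * 2))
    by (intros; ring_R).
  apply (is_derive_RInt_affine_param (F0 nu a) (F1 nu a) (fun _ => 2) sinsq (-nu) a); auto.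
  - intros; apply is_derive_F0; auto.
  - intros; apply continuous_F1; auto.
  - intros; apply continuous_Rconst.
  - apply continuous_sinsq.
  - apply sinsq_bound.
Qed.

Lemma is_derive_J_v : is_derive (fun z => J nu a u z) v (J3 nu a u v).
Proof.
  unfold J, Jint, J3.
  apply is_derive_ext with (f := fun z => RInt (fun t => F0 nu a (u + (z - u) * cossq t) * 2) 0 (PI / 2)).
  { intros z. apply RInt_ext. intros. rewrite eta_cossq. reflexivity. }
  rewrite <- (RInt_ext (fun t => F1 nu a (u + (v - u) * cossq t) * cossq t * 2))
    by (intros; rewrite eta_cossq; ring_R).
  apply (is_derive_RInt_affine_param (F0 nu a) (F1 nu a) (fun _ => 2) cossq (-nu) a); auto.
  - intros; apply is_derive_F0; auto.
  - intros; apply continuous_F1; auto.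
  - intros; apply continuous_Rconst.
  - apply continuous_cossq.
  - apply cossq_bound.
Qed.

Lemma is_derive_J2_u : is_derive (fun z => J2 nu a z v) u (J22 nu a u v).
Proof.
  unfold J2, J22, eta.
  rewrite <- (RInt_ext (fun t => F2 nu a (v + (u - v) * sinsq t) * sinsq t * (2 * sinsq t)))
    by (intros; ring_R).
  apply (is_derive_RInt_affine_param (F1 nu a) (F2 nu a) (fun t => 2 * sinsq t) sinsq (-nu) a); auto.
  - intros; apply is_derive_F1; auto.
  - intros; apply continuous_F2; auto.
  - intros; apply continuous_Rmult; [apply continuous_Rconst | apply continuous_sinsq].
  - apply continuous_sinsq.
  - apply sinsq_bound.
Qed.

Lemma ex_derive_J3_u : ex_derive (fun z => J3 nu a z v) u.
Proof.
  unfold J3, eta. eexists.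
  apply (is_derive_RInt_affine_param (F1 nu a) (F2 nu a) (fun t => 2 * cossq t) sinsq (-nu) a); auto.
  - intros; apply is_derive_F1; auto.
  - intros; apply continuous_F2; auto.
  - intros; apply continuous_Rmult; [apply continuous_Rconst | apply continuous_cossq].
  - apply continuous_sinsq.
  - apply sinsq_bound.
Qed.

End Derivatives.

(** * [I] as a proper integral *)

Definition theta (u v x : R) := asin (sqrt ((x - v) / (u - v))).

Section Substitution.

Variables nu a u v : R.
Hypotheses (Hv : -nu < v) (Hvu : v < u) (Hu : u < a).

Lemma ratio_in_0_1 x : v < x < u -> 0 < (x - v) / (u - v) < 1 /\ 0 < (u - x) / (u - v) < 1.
Proof.
  intros. split; split; try (apply Rdiv_lt_0_compat; lra);
    apply Rmult_lt_reg_r with (u - v); try lra; unfold Rdiv; rewrite Rmult_assoc, Rinv_l; lra.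
Qed.

Lemma theta_spec x : v < x < u -> 0 < theta u v x < PI / 2 /\ eta u v (theta u v x) = x.
Proof.
  intros hx. unfold theta. destruct (ratio_in_0_1 x hx) as [q _].
  assert (sq := sqrt_in_0_1 _ q).
  split; [apply asin_in_0_PI2; auto|].
  unfold eta, sinsq. rewrite sin_asin by lra. simpl. rewrite Rmult_1_r, sqrt_sqrt by lra.
  field. lra.
Qed.

Lemma PI2_minus_theta y : v < y < u -> PI / 2 - theta u v y = asin (sqrt ((u - y) / (u - v))).
Proof.
  intros hy. unfold theta. destruct (ratio_in_0_1 y hy) as [q _].
  assert (A := asin_in_0_PI2 _ (sqrt_in_0_1 _ q)).
  rewrite <- (asin_sin (PI / 2 - asin (sqrt ((y - v) / (u - v))))) by lra.
  f_equal. rewrite sin_shift, cos_asin by (assert (H := sqrt_in_0_1 _ q); lra).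
  f_equal. unfold Rsqr. rewrite sqrt_sqrt by lra. field. lra.
Qed.

(* With [eta = v + (u - v) sin^2 t], [(u - eta)(eta - v) = ((u - v) sin t cos t)^2], which
   cancels the two endpoint singularities of [integrand]. *)
Lemma integrand_eta th : 0 < th < PI / 2 ->
  (u - v) * (2 * sin th * cos th) * integrand nu a u v (eta u v th) = Jint nu a u v th.
Proof.
  intros hth.
  assert (sp : 0 < sin th) by (apply sin_gt_0; lra).
  assert (cp : 0 < cos th) by (apply cos_gt_0; lra).
  assert (He : v < eta u v th < u).
  { destruct (sinsq_cossq_pos th hth). assert (Hsc := sinsq_plus_cossq th). unfold eta. split; nra. }
  assert (HS := sinsq_plus_cossq th). unfold sinsq, cossq in HS.
  unfold Jint. set (e := eta u v th) in *.
  assert (p1 : 0 < e + nu) by lra. assert (p2 : 0 < a - e) by lra.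
  assert (s1 := sqrt_lt_R0 _ p1). assert (s2 := sqrt_lt_R0 _ p2).
  assert (e1 := sqrt_sqrt _ (Rlt_le _ _ p1)). assert (e2 := sqrt_sqrt _ (Rlt_le _ _ p2)).
  assert (Hue : u - e = (u - v) * cos th ^ 2)
    by (unfold e, eta, sinsq; replace (sin th ^ 2) with (1 - cos th ^ 2) by lra; ring).
  assert (Hev : e - v = (u - v) * sin th ^ 2) by (unfold e, eta, sinsq; ring).
  unfold integrand, F0.
  rewrite (sqrt_lem_1 ((e + nu) * (a - e) * (u - e) * (e - v))
     (sqrt (e + nu) * sqrt (a - e) * ((u - v) * sin th * cos th))).
  - set (q1 := sqrt (e + nu)) in *. set (q2 := sqrt (a - e)) in *.
    replace (e + nu) with (q1 * q1) by lra. field. repeat split; lra.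
  - rewrite Hue, Hev. repeat apply Rmult_le_pos; nra.
  - repeat apply Rmult_le_pos; lra.
  - rewrite Hue, Hev.
    transitivity ((sqrt (e + nu) * sqrt (e + nu)) * (sqrt (a - e) * sqrt (a - e)) *
      ((u - v) * (u - v)) * (sin th * sin th * (cos th * cos th))); [ring|].
    rewrite e1, e2. ring.
Qed.

Lemma continuous_integrand z : v < z < u -> continuous (integrand nu a u v) z.
Proof.
  intros hz. apply ex_derive_continuous_R. unfold integrand.
  assert (P : 0 < (z + nu) * (a - z) * (u - z) * (z - v)) by (repeat apply Rmult_lt_0_compat; lra).
  auto_derive. repeat split; auto. apply Rgt_not_eq, sqrt_lt_R0, P.
Qed.

Lemma is_RInt_integrand_theta x y : v < x < u -> v < y < u ->
  is_RInt (integrand nu a u v) x y (RInt (Jint nu a u v) (theta u v x) (theta u v y)).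
Proof.
  intros hx hy.
  destruct (theta_spec x hx) as [tx ex]. destruct (theta_spec y hy) as [ty ey].
  set (tm := Rmin (theta u v x) (theta u v y)). set (tM := Rmax (theta u v x) (theta u v y)).
  assert (Hin : forall t, tm <= t <= tM -> 0 < t < PI / 2).
  { intros t [ht1 ht2]. split.
    - apply Rlt_le_trans with tm; auto. apply Rmin_glb_lt; lra.
    - apply Rle_lt_trans with tM; auto. apply Rmax_lub_lt; lra. }
  assert (Heta : forall t, 0 < t < PI / 2 -> v < eta u v t < u).
  { intros t ht. destruct (sinsq_cossq_pos t ht) as [q1 q2].
    assert (HS := sinsq_plus_cossq t). unfold eta. split; nra. }
  assert (comp := is_RInt_comp (V := R_CompleteNormedModule) (integrand nu a u v) (eta u v)
    (fun t => (u - v) * (2 * sin t * cos t)) (theta u v x) (theta u v y)).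
  rewrite ex, ey in comp.
  assert (E : RInt (integrand nu a u v) x y = RInt (Jint nu a u v) (theta u v x) (theta u v y)).
  { symmetry. erewrite <- is_RInt_unique.
    2: { apply comp.
      - intros t ht. apply continuous_integrand, Heta, Hin, ht.
      - intros t ht. split; [apply is_derive_eta|].
        apply ex_derive_continuous_R. auto_derive. exact I. }
    apply RInt_ext. intros t ht. rewrite <- integrand_eta; [reflexivity|].
    apply Hin. split; apply Rlt_le; apply ht. }
  rewrite <- E. apply (RInt_correct (V := R_CompleteNormedModule)).
  apply (ex_RInt_continuous (V := R_CompleteNormedModule)).
  intros z [hz1 hz2]. apply continuous_integrand. split.
  - apply Rlt_le_trans with (Rmin x y); auto. apply Rmin_glb_lt; lra.
  - apply Rle_lt_trans with (Rmax x y); auto. apply Rmax_lub_lt; lra.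
Qed.

Lemma Jint_bound t : 0 <= Jint nu a u v t <= 2 * (sqrt (u + nu) / sqrt (a - u)).
Proof.
  unfold Jint, F0. assert (He := eta_bounds u v t ltac:(lra)).
  set (e := eta u v t) in *.
  assert (s1 := sqrt_lt_R0 (e + nu) ltac:(lra)). assert (s2 := sqrt_lt_R0 (a - e) ltac:(lra)).
  assert (s3 : 0 < sqrt (a - u)) by (apply sqrt_lt_R0; lra).
  assert (m1 : sqrt (e + nu) <= sqrt (u + nu)) by (apply sqrt_le_1; lra).
  assert (m2 : sqrt (a - u) <= sqrt (a - e)) by (apply sqrt_le_1; lra).
  split; [apply Rmult_le_pos; [apply Rlt_le, Rdiv_lt_0_compat|]; lra|].
  rewrite (Rmult_comm 2). apply Rmult_le_compat_r; [lra|].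
  unfold Rdiv. apply Rmult_le_compat; try lra; [apply Rlt_le, Rinv_0_lt_compat; lra|].
  apply Rinv_le_contravar; lra.
Qed.

Lemma RInt_Jint_sub_J p q : 0 <= p <= PI / 2 -> 0 <= q <= PI / 2 ->
  Rabs (RInt (Jint nu a u v) p q - J nu a u v) <=
  2 * (sqrt (u + nu) / sqrt (a - u)) * (p + (PI / 2 - q)).
Proof.
  intros hp hq. set (M := 2 * (sqrt (u + nu) / sqrt (a - u))).
  assert (exJ : forall p q, ex_RInt (Jint nu a u v) p q)
    by (intros; apply ex_RInt_continuous_R; intros; apply continuous_Jint; auto).
  unfold J.
  rewrite <- (RInt_Chasles_R _ 0 p (PI / 2)), <- (RInt_Chasles_R _ p q (PI / 2)) by auto.
  assert (B : forall r s, r <= s -> Rabs (RInt (Jint nu a u v) r s) <= (s - r) * M).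
  { intros r s hrs. apply abs_RInt_le_const; auto. intros t _.
    destruct (Jint_bound t). rewrite Rabs_pos_eq; auto. }
  assert (B1 := B 0 p ltac:(lra)). assert (B2 := B q (PI / 2) ltac:(lra)).
  replace (RInt (Jint nu a u v) p q - (RInt (Jint nu a u v) 0 p +
    (RInt (Jint nu a u v) p q + RInt (Jint nu a u v) q (PI / 2))))
    with (- (RInt (Jint nu a u v) 0 p + RInt (Jint nu a u v) q (PI / 2))) by ring.
  rewrite Rabs_Ropp. eapply Rle_trans; [apply Rabs_triang | nra].
Qed.

(* Near [v] and near [u], [theta] is close to [0] and to [PI / 2]: the truncated integrals
   converge to [J] at rate [O(theta x + (PI/2 - theta y))]. *)
Lemma Ifun_eq_J : Ifun nu a u v = J nu a u v.
Proof.
  unfold Ifun. apply is_RInt_gen_unique, filterlimi_locally. intros eps.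
  set (M := 2 * (sqrt (u + nu) / sqrt (a - u))).
  assert (HM : 0 <= M)
    by (unfold M; apply Rmult_le_pos; [lra | apply Rlt_le, Rdiv_lt_0_compat; apply sqrt_lt_R0; lra]).
  assert (He : 0 < eps / (2 * (M + 1))) by (apply Rdiv_lt_0_compat; [apply cond_pos | lra]).
  destruct (asin_sqrt_small _ He) as [d [Hd Hd2]].
  assert (Hr : 0 < Rmin (u - v) (d * (u - v))) by (apply Rmin_glb_lt; nra).
  assert (m1 := Rmin_l (u - v) (d * (u - v))). assert (m2 := Rmin_r (u - v) (d * (u - v))).
  apply Filter_prod with
    (Q := fun x => v < x < u /\ (x - v) / (u - v) < d)
    (R := fun y => v < y < u /\ (u - y) / (u - v) < d).
  - exists (mkposreal _ Hr). intros x Hx Hvx. change (Rabs (x - v) < Rmin (u - v) (d * (u - v))) in Hx.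
    apply Rabs_lt_between in Hx. split; [lra|].
    apply Rmult_lt_reg_r with (u - v); [lra|]. unfold Rdiv. rewrite Rmult_assoc, Rinv_l; lra.
  - exists (mkposreal _ Hr). intros y Hy Hvy. change (Rabs (y - u) < Rmin (u - v) (d * (u - v))) in Hy.
    apply Rabs_lt_between in Hy. split; [lra|].
    apply Rmult_lt_reg_r with (u - v); [lra|]. unfold Rdiv. rewrite Rmult_assoc, Rinv_l; lra.
  - intros x y [Hx Hxd] [Hy Hyd]. simpl.
    exists (RInt (Jint nu a u v) (theta u v x) (theta u v y)).
    split; [apply is_RInt_integrand_theta; auto|].
    change (Rabs (RInt (Jint nu a u v) (theta u v x) (theta u v y) - J nu a u v) < eps).
    destruct (theta_spec x Hx) as [tx _]. destruct (theta_spec y Hy) as [ty _].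
    destruct (ratio_in_0_1 x Hx) as [rx _]. destruct (ratio_in_0_1 y Hy) as [_ ry].
    assert (Ex : theta u v x < eps / (2 * (M + 1))) by (apply Hd2; lra).
    assert (Ey : PI / 2 - theta u v y < eps / (2 * (M + 1)))
      by (rewrite PI2_minus_theta by auto; apply Hd2; lra).
    eapply Rle_lt_trans; [apply RInt_Jint_sub_J; lra|]. fold M.
    assert (0 < eps) by apply cond_pos.
    apply Rle_lt_trans with ((M + 1) * (theta u v x + (PI / 2 - theta u v y))); [nra|].
    apply Rlt_le_trans with ((M + 1) * (2 * (eps / (2 * (M + 1))))); [apply Rmult_lt_compat_l; lra|].
    right; field; lra.
Qed.

End Substitution.

Section Identities.

Variables nu a u v : R.
Hypotheses (Hv : -nu < v) (Hvu : v < u) (Hu : u < a).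

Lemma dI2_eq_J2 : dI2 nu a u v = J2 nu a u v.
Proof.
  unfold dI2. rewrite (Derive_ext_loc _ (fun z => J nu a z v)).
  - apply is_derive_unique, is_derive_J_u; lra.
  - eapply filter_imp; [|apply (locally_open_interval u v a); lra].
    intros y Hy. apply Ifun_eq_J; lra.
Qed.

Lemma dI3_eq_J3 : dI3 nu a u v = J3 nu a u v.
Proof.
  unfold dI3. rewrite (Derive_ext_loc _ (fun z => J nu a u z)).
  - apply is_derive_unique, is_derive_J_v; lra.
  - eapply filter_imp; [|apply (locally_open_interval v (-nu) u); lra].
    intros y Hy. apply Ifun_eq_J; lra.
Qed.

(* Integration by parts against [sin t cos t], which vanishes at both ends. *)
Lemma J2_sub_J3 : J2 nu a u v - J3 nu a u v = 4 * (u - v) * Jsc nu a u v.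
Proof.
  set (G := fun t => F1 nu a (eta u v t) * (sin t * cos t)).
  set (g1 := fun t => F2 nu a (eta u v t) * (sinsq t * cossq t)).
  set (g2 := fun t => F1 nu a (eta u v t) * (cossq t + -1 * sinsq t)).
  assert (Hg1 : forall t, continuous g1 t).
  { intros t. apply continuous_Rmult; [apply continuous_F2_eta; auto|].
    apply continuous_Rmult; [apply continuous_sinsq | apply continuous_cossq]. }
  assert (Hg2 : forall t, continuous g2 t).
  { intros t. apply continuous_Rmult; [apply continuous_F1_eta; auto|].
    apply continuous_Rplus; [apply continuous_cossq|].
    apply continuous_Rmult; [apply continuous_Rconst | apply continuous_sinsq]. }
  assert (HD : forall t, is_derive G t (2 * (u - v) * g1 t + 1 * g2 t)).
  { intros t. assert (He := eta_bounds u v t ltac:(lra)).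
    assert (H1 := is_derive_comp (F1 nu a) (eta u v) t _ _
      (is_derive_F1 nu a (eta u v t) ltac:(lra)) (is_derive_eta u v t)).
    assert (H2 : is_derive (fun t => sin t * cos t) t (cos t ^ 2 - sin t ^ 2))
      by (auto_derive; [exact I | ring]).
    eapply is_derive_replace; [exact (is_derive_mult _ _ t _ _ H1 H2 Rmult_comm)|].
    unfold g1, g2, sinsq, cossq.
    change ((u - v) * (2 * sin t * cos t) * F2 nu a (eta u v t) * (sin t * cos t)
      + F1 nu a (eta u v t) * (cos t ^ 2 - sin t ^ 2) =
      2 * (u - v) * (F2 nu a (eta u v t) * (sin t ^ 2 * cos t ^ 2))
      + 1 * (F1 nu a (eta u v t) * (cos t ^ 2 + -1 * sin t ^ 2))). ring. }
  assert (Hibp : 2 * (u - v) * RInt g1 0 (PI / 2) + 1 * RInt g2 0 (PI / 2) = 0).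
  { rewrite <- RInt_lincomb by (apply ex_RInt_continuous_R; auto).
    rewrite (is_RInt_unique _ _ _ _ (is_RInt_derive G _ 0 (PI / 2) (fun t _ => HD t)
      (fun t _ => continuous_Rplus _ _ t
         (continuous_Rmult _ _ t (continuous_Rconst _ t) (Hg1 t))
         (continuous_Rmult _ _ t (continuous_Rconst _ t) (Hg2 t))))).
    unfold G. rewrite sin_0, cos_PI2. change (F1 nu a (eta u v (PI / 2)) * (sin (PI / 2) * 0)
      - F1 nu a (eta u v 0) * (0 * cos 0) = 0). ring. }
  assert (E : J2 nu a u v - J3 nu a u v = -2 * RInt g2 0 (PI / 2)).
  { rewrite <- RInt_Rscal by (apply ex_RInt_continuous_R; auto).
    replace (J2 nu a u v - J3 nu a u v) with (1 * J2 nu a u v + -1 * J3 nu a u v) by ring.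
    unfold J2, J3. rewrite <- RInt_lincomb by auto using ex_RInt_F1_eta_sinsq, ex_RInt_F1_eta_cossq.
    apply RInt_ext. intros t _. unfold g2. ring_R. }
  unfold Jsc. fold g1. lra.
Qed.

End Identities.

(** * Positivity of [J22] *)

Section Positivity.

Variables nu a u v : R.
Hypotheses (Hv : -nu < v) (Hvu : v < u) (Hu : u < a).

Lemma F2_eta_factor t : exists c, 0 < c /\
  F2 nu a (eta u v t) = (u - v) * (sinsq t - ((a + nu) / 4 - nu - v) / (u - v)) * c.
Proof.
  assert (He := eta_bounds u v t ltac:(lra)).
  destruct (F2_factor nu a (eta u v t) ltac:(lra)) as [c [Hc E]].
  exists c. split; auto. rewrite E. unfold eta. field. lra.
Qed.

Lemma Jsc_neg : u <= (a + nu) / 4 - nu -> Jsc nu a u v < 0.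
Proof.
  intros Hthr. pose proof PI_RGT_0.
  assert (0 < RInt (fun t => -1 * (F2 nu a (eta u v t) * (sinsq t * cossq t))) 0 (PI / 2)).
  { apply RInt_gt_0; [lra| |].
    - intros t Ht. destruct (sinsq_cossq_pos t Ht) as [q1 q2]. assert (Hsc := sinsq_plus_cossq t).
      destruct (F2_eta_factor t) as [c [Hc E]]. rewrite E.
      set (s0 := ((a + nu) / 4 - nu - v) / (u - v)).
      assert (1 <= s0).
      { unfold s0. apply Rmult_le_reg_r with (u - v); [lra|].
        unfold Rdiv. rewrite Rmult_assoc, Rinv_l; lra. }
      assert (0 < (u - v) * (s0 - sinsq t) * c) by (repeat apply Rmult_lt_0_compat; lra).
      assert (0 < sinsq t * cossq t) by nra. nra.
    - intros t _. apply continuous_Rmult; [apply continuous_Rconst|].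
      apply continuous_Rmult; [apply continuous_F2_eta; auto|].
      apply continuous_Rmult; [apply continuous_sinsq | apply continuous_cossq]. }
  rewrite RInt_Rscal in H0 by (apply ex_RInt_F2_eta_sinsq_cossq; auto).
  unfold Jsc. lra.
Qed.

(* [2 sin^4 = 2 k sin^2 cos^2 + 2 sin^2 (sin^2 - s0) / (1 - s0)] with [k = s0 / (1 - s0)], where
   [sin^2 = s0] is where [F2 (eta)] changes sign: this splits [J22] into [Jsc] and an integral
   whose integrand is [F2 (eta)] times a factor of the same sign. *)
Lemma J22_pos_of_Jsc_nonneg : 4 * (v + nu) < a + nu -> 0 <= Jsc nu a u v -> 0 < J22 nu a u v.
Proof.
  intros Hthr HJ. pose proof PI_RGT_0.
  set (s0 := ((a + nu) / 4 - nu - v) / (u - v)).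
  assert (Hs0 : 0 < s0) by (unfold s0; apply Rdiv_lt_0_compat; lra).
  assert (Hs1 : s0 < 1).
  { destruct (Rle_lt_dec u ((a + nu) / 4 - nu)) as [H1|H1].
    - assert (Jsc nu a u v < 0) by (apply Jsc_neg; lra). lra.
    - unfold s0. apply Rmult_lt_reg_r with (u - v); [lra|].
      unfold Rdiv. rewrite Rmult_assoc, Rinv_l; lra. }
  set (th0 := asin (sqrt s0)).
  assert (Hsq := sqrt_in_0_1 s0 ltac:(lra)).
  assert (Hth : 0 < th0 < PI / 2) by (apply asin_in_0_PI2; auto).
  assert (Sth : sinsq th0 = s0).
  { unfold sinsq, th0. rewrite sin_asin by lra. simpl. rewrite Rmult_1_r, sqrt_sqrt; lra. }
  set (g := fun t => F2 nu a (eta u v t) * (sinsq t * (sinsq t - s0))).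
  assert (Hg : forall t, 0 <= g t /\ (s0 < sinsq t -> 0 < g t)).
  { intros t. destruct (F2_eta_factor t) as [c [Hc E]]. assert (Hs := sinsq_bound t).
    unfold g. rewrite E. fold s0.
    replace ((u - v) * (sinsq t - s0) * c * (sinsq t * (sinsq t - s0)))
      with ((u - v) * c * (sinsq t * ((sinsq t - s0) * (sinsq t - s0)))) by ring.
    assert (0 < (u - v) * c) by (apply Rmult_lt_0_compat; lra).
    assert (0 <= (sinsq t - s0) * (sinsq t - s0)) by apply Rle_0_sqr.
    split; [apply Rmult_le_pos; [lra | apply Rmult_le_pos; lra]|].
    intros. apply Rmult_lt_0_compat; [lra | apply Rmult_lt_0_compat; nra]. }
  assert (Hgc : forall t, continuous g t).
  { intros t. apply continuous_Rmult; [apply continuous_F2_eta; auto|].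
    apply continuous_Rmult; [apply continuous_sinsq|].
    apply continuous_Rplus; [apply continuous_sinsq | apply continuous_Rconst]. }
  assert (Qpos : 0 < RInt g 0 (PI / 2)).
  { apply (RInt_gt_0_of_tail g 0 th0); auto; [lra | intros; apply Hg|].
    intros t Ht. apply Hg. rewrite <- Sth. apply sinsq_increasing; lra. }
  assert (EJ : J22 nu a u v = 2 * (s0 / (1 - s0)) * Jsc nu a u v + 2 / (1 - s0) * RInt g 0 (PI / 2)).
  { unfold J22, Jsc.
    rewrite <- RInt_lincomb by (auto using ex_RInt_F2_eta_sinsq_cossq, ex_RInt_continuous_R).
    apply RInt_ext. intros t _. unfold g.
    replace (cossq t) with (1 - sinsq t) by (assert (H1 := sinsq_plus_cossq t); lra).
    change (F2 nu a (eta u v t) * (2 * sinsq t * sinsq t) =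
      2 * (s0 / (1 - s0)) * (F2 nu a (eta u v t) * (sinsq t * (1 - sinsq t))) +
      2 / (1 - s0) * (F2 nu a (eta u v t) * (sinsq t * (sinsq t - s0)))).
    field. lra. }
  assert (0 <= 2 * (s0 / (1 - s0))) by (apply Rmult_le_pos; [lra | apply Rlt_le, Rdiv_lt_0_compat; lra]).
  assert (0 < 2 / (1 - s0)) by (apply Rdiv_lt_0_compat; lra).
  rewrite EJ. nra.
Qed.

End Positivity.

(** * Behaviour as [u] tends to [a] *)

Section Asymptotics.

Variables nu a u v : R.
Hypotheses (Hv : -nu < v) (Hvu : v < u) (Hu : u < a).

Lemma a_sub_eta t : a - eta u v t = (a - u) + (u - v) * cossq t.
Proof. rewrite eta_cossq. ring. Qed.

Lemma J3_upper : J3 nu a u v <= PI / 2 * ((a + nu) / (sqrt (v + nu) * (u - v) * sqrt (a - u))).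
Proof.
  pose proof PI_RGT_0. replace (PI / 2) with (PI / 2 - 0) by ring.
  apply RInt_le_const; [lra | apply ex_RInt_F1_eta_cossq; auto|].
  intros t _. assert (He := eta_bounds u v t ltac:(lra)).
  assert (HQ := a_sub_eta t). assert (HC := cossq_bound t).
  set (e := eta u v t) in *.
  assert (s1 := sqrt_lt_R0 (e + nu) ltac:(lra)). assert (s2 := sqrt_lt_R0 (a - e) ltac:(lra)).
  assert (s3 := sqrt_lt_R0 (v + nu) ltac:(lra)). assert (s4 := sqrt_lt_R0 (a - u) ltac:(lra)).
  assert (m1 : sqrt (v + nu) <= sqrt (e + nu)) by (apply sqrt_le_1; lra).
  assert (m2 : sqrt (a - u) <= sqrt (a - e)) by (apply sqrt_le_1; lra).
  unfold F1.
  replace ((a + nu) / (2 * sqrt (e + nu) * sqrt (a - e) * (a - e)) * (2 * cossq t))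
    with ((a + nu) * cossq t / (sqrt (e + nu) * sqrt (a - e) * (a - e))) by (field; repeat split; lra).
  apply Rdiv_le_cross; [repeat apply Rmult_lt_0_compat; lra .. |].
  assert (X : sqrt (v + nu) * ((u - v) * cossq t) * sqrt (a - u) <= sqrt (e + nu) * (a - e) * sqrt (a - e)).
  { apply Rmult_le_compat; try lra; [apply Rmult_le_pos; nra | apply Rmult_le_compat; nra]. }
  replace ((a + nu) * cossq t * (sqrt (v + nu) * (u - v) * sqrt (a - u)))
    with ((a + nu) * (sqrt (v + nu) * ((u - v) * cossq t) * sqrt (a - u))) by ring.
  replace ((a + nu) * (sqrt (e + nu) * sqrt (a - e) * (a - e)))
    with ((a + nu) * (sqrt (e + nu) * (a - e) * sqrt (a - e))) by ring.
  apply Rmult_le_compat_l; lra.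
Qed.

Lemma F1_eta_lower t : cossq t <= a - u ->
  (a + nu) / (2 * sqrt (a + nu) * (sqrt (a - u) * sqrt (1 + (a - v))) * ((a - u) * (1 + (a - v))))
  <= F1 nu a (eta u v t).
Proof.
  intros HC. assert (He := eta_bounds u v t ltac:(lra)). assert (HQ := a_sub_eta t).
  assert (HC0 := cossq_bound t).
  set (ep := a - u) in *. set (K := 1 + (a - v)). set (A := a + nu). set (e := eta u v t) in *.
  assert (hep : 0 < ep) by (unfold ep; lra). assert (hK : 1 < K) by (unfold K; lra).
  assert (sA := sqrt_lt_R0 A ltac:(unfold A; lra)). assert (sK := sqrt_lt_R0 K ltac:(lra)).
  assert (se := sqrt_lt_R0 ep hep).
  assert (s1 := sqrt_lt_R0 (e + nu) ltac:(lra)). assert (s2 := sqrt_lt_R0 (a - e) ltac:(lra)).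
  assert (HQK : a - e <= ep * K) by (unfold K; nra).
  assert (m1 : sqrt (e + nu) <= sqrt A) by (apply sqrt_le_1; unfold A; lra).
  assert (m2 : sqrt (a - e) <= sqrt ep * sqrt K) by (rewrite <- sqrt_mult by lra; apply sqrt_le_1; nra).
  unfold F1. fold A. apply Rdiv_le_cross; [repeat apply Rmult_lt_0_compat; lra .. |].
  apply Rmult_le_compat_l; [unfold A; lra|].
  apply Rmult_le_compat; [repeat apply Rmult_le_pos; lra | lra | | lra].
  apply Rmult_le_compat; lra.
Qed.

(* Only the window [t > PI/2 - sqrt (a - u)], where [a - eta = O(a - u)], is used. *)
Lemma J2_lower : a - u <= 1 / 4 ->
  sqrt (a + nu) / (2 * (1 + (a - v)) * sqrt (1 + (a - v)) * (a - u)) <= J2 nu a u v.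
Proof.
  intros h4. pose proof PI2_1.
  set (ep := a - u). set (K := 1 + (a - v)). set (A := a + nu). set (de := sqrt ep).
  assert (hep : 0 < ep) by (unfold ep; lra).
  assert (hde : 0 < de) by (apply sqrt_lt_R0; lra).
  assert (dd : de * de = ep) by (apply sqrt_sqrt; lra).
  assert (hde2 : de <= 1 / 2) by (unfold ep in *; nra).
  assert (sA := sqrt_lt_R0 A ltac:(unfold A; lra)). assert (sK := sqrt_lt_R0 K ltac:(unfold K; lra)).
  assert (sAA : sqrt A * sqrt A = A) by (apply sqrt_sqrt; unfold A; lra).
  set (c0 := A / (2 * sqrt A * (de * sqrt K) * (ep * K))).
  assert (hc0 : 0 < c0)
    by (unfold c0, A, K in *; apply Rdiv_lt_0_compat; [lra | repeat apply Rmult_lt_0_compat; lra]).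
  unfold J2. rewrite <- (RInt_Chasles_R _ 0 (PI / 2 - de) (PI / 2)) by (apply ex_RInt_F1_eta_sinsq; auto).
  assert (B1 : 0 <= RInt (fun t => F1 nu a (eta u v t) * (2 * sinsq t)) 0 (PI / 2 - de)).
  { apply RInt_ge_0; [lra | apply ex_RInt_F1_eta_sinsq; auto|]. intros t _.
    assert (He := eta_bounds u v t ltac:(lra)). assert (H1 := F1_pos nu a (eta u v t) ltac:(lra)).
    assert (H' := sinsq_bound t). nra. }
  assert (B2 : (PI / 2 - (PI / 2 - de)) * c0 <=
    RInt (fun t => F1 nu a (eta u v t) * (2 * sinsq t)) (PI / 2 - de) (PI / 2)).
  { apply RInt_ge_const; [lra | apply ex_RInt_F1_eta_sinsq; auto|].
    intros t Ht. assert (HS := sinsq_ge_half t ltac:(lra)).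
    assert (HC := cossq_le_sq_dist_PI2 t ltac:(lra)).
    assert (F1b : c0 <= F1 nu a (eta u v t)) by (apply F1_eta_lower; fold ep; nra).
    nra. }
  assert (Eq : (PI / 2 - (PI / 2 - de)) * c0 = sqrt A / (2 * K * sqrt K * ep))
    by (unfold c0; rewrite <- sAA at 1; field; unfold K in *; repeat split; lra).
  lra.
Qed.

(* Split according to whether [a - eta < dd]: there [sin^2 >= 1/2] and [F0 = O(dd F1)];
   elsewhere [F0 <= sqrt (a + nu) / sqrt dd]. *)
Lemma Jint_upper dd t : 0 < dd -> dd <= (u - v) / 2 ->
  Jint nu a u v t <= 4 * dd * (F1 nu a (eta u v t) * (2 * sinsq t)) + 1 * (2 * sqrt (a + nu) / sqrt dd).
Proof.
  intros hd hd2. assert (He := eta_bounds u v t ltac:(lra)).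
  assert (HQ := a_sub_eta t). assert (HC := cossq_bound t). assert (HSC := sinsq_plus_cossq t).
  assert (HF1 := F1_pos nu a (eta u v t) ltac:(lra)). assert (HS0 := sinsq_bound t).
  set (A := a + nu). set (c := 2 * sqrt A / sqrt dd).
  assert (sA := sqrt_lt_R0 A ltac:(unfold A; lra)). assert (sd := sqrt_lt_R0 dd hd).
  assert (hc : 0 < c) by (unfold c; apply Rdiv_lt_0_compat; lra).
  unfold Jint. set (e := eta u v t) in *.
  assert (s1 := sqrt_lt_R0 (e + nu) ltac:(lra)). assert (s2 := sqrt_lt_R0 (a - e) ltac:(lra)).
  assert (T1 : 0 <= 4 * dd * (F1 nu a e * (2 * sinsq t))) by (apply Rmult_le_pos; nra).
  destruct (Rlt_le_dec (a - e) dd) as [Hq|Hq].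
  - assert (HS : 1 / 2 <= sinsq t).
    { assert (cossq t < 1 / 2); [|lra].
      apply Rmult_lt_reg_l with (u - v); lra. }
    rewrite F0_eq_F1 by lra. fold A.
    assert (2 * (e + nu) * (a - e) / A <= 2 * dd).
    { apply Rmult_le_reg_r with A; [unfold A; lra|].
      unfold Rdiv. rewrite Rmult_assoc, Rinv_l by (unfold A; lra).
      assert (e + nu <= A) by (unfold A; lra). nra. }
    assert (F1 nu a e * (2 * (e + nu) * (a - e) / A) <= F1 nu a e * (2 * dd))
      by (apply Rmult_le_compat_l; lra).
    assert (F1 nu a e * 1 <= F1 nu a e * (2 * sinsq t)) by (apply Rmult_le_compat_l; lra).
    nra.
  - unfold F0.
    assert (m1 : sqrt (e + nu) <= sqrt A) by (apply sqrt_le_1; unfold A; lra).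
    assert (m2 : sqrt dd <= sqrt (a - e)) by (apply sqrt_le_1; lra).
    assert (sqrt (e + nu) / sqrt (a - e) * 2 <= c).
    { unfold c. replace (sqrt (e + nu) / sqrt (a - e) * 2) with (2 * sqrt (e + nu) / sqrt (a - e))
        by (field; lra).
      apply Rdiv_le_cross; nra. }
    lra.
Qed.

Lemma J_upper dd : 0 < dd -> dd <= (u - v) / 2 ->
  J nu a u v <= 4 * dd * J2 nu a u v + 1 * (PI / 2 * (2 * sqrt (a + nu) / sqrt dd)).
Proof.
  intros hd hd2. pose proof PI_RGT_0. set (c := 2 * sqrt (a + nu) / sqrt dd).
  unfold J, J2.
  replace (PI / 2 * c) with (RInt (fun _ => c) 0 (PI / 2))
    by (rewrite (RInt_const (V := R_CompleteNormedModule)); change ((PI / 2 - 0) * c = PI / 2 * c); ring).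
  rewrite <- RInt_lincomb
    by (auto using ex_RInt_F1_eta_sinsq; apply (ex_RInt_const (V := R_CompleteNormedModule))).
  apply RInt_le; [lra | apply ex_RInt_continuous_R; intros; apply continuous_Jint; auto | |].
  - apply ex_RInt_continuous_R. intros t. apply continuous_Rplus.
    + apply continuous_Rmult; [apply continuous_Rconst|].
      apply continuous_Rmult; [apply continuous_F1_eta; auto|].
      apply continuous_Rmult; [apply continuous_Rconst | apply continuous_sinsq].
    + apply continuous_Rmult; apply continuous_Rconst.
  - intros t _. apply Jint_upper; auto.
Qed.

End Asymptotics.

(** * Monotonicity and inversion of [lambda2] *)

Definition Lam (nu a v u : R) := a + u + v + 2 * nu - J nu a u v / J2 nu a u v.

Section Lambda.

Variables nu a u v : R.
Hypotheses (Hv : -nu < v) (Hvu : v < u) (Hu : u < a).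

Lemma lambda2_eq_Lam : lambda2 nu a u v = Lam nu a v u.
Proof. unfold lambda2, Lam. rewrite dI2_eq_J2, Ifun_eq_J; auto. Qed.

Lemma lambda2_eq_lambda3_iff : lambda2 nu a u v = lambda3 nu a u v <-> J2 nu a u v = J3 nu a u v.
Proof.
  rewrite lambda2_eq_Lam. unfold lambda3, Lam. rewrite dI3_eq_J3, Ifun_eq_J by auto.
  assert (p := J_pos nu a u v Hv Hvu Hu). assert (p2 := J2_pos nu a u v Hv Hvu Hu).
  assert (p3 := J3_pos nu a u v Hv Hvu Hu).
  split; intros E; [|rewrite E; reflexivity].
  apply Rmult_eq_reg_l with (J nu a u v / (J2 nu a u v * J3 nu a u v)).
  - replace (J nu a u v / (J2 nu a u v * J3 nu a u v) * J2 nu a u v) with (J nu a u v / J3 nu a u v)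
      by (field; lra).
    replace (J nu a u v / (J2 nu a u v * J3 nu a u v) * J3 nu a u v) with (J nu a u v / J2 nu a u v)
      by (field; lra).
    lra.
  - apply Rgt_not_eq, Rdiv_lt_0_compat; nra.
Qed.

Lemma is_derive_Lam :
  is_derive (Lam nu a v) u (J nu a u v * J22 nu a u v / (J2 nu a u v * J2 nu a u v)).
Proof.
  unfold Lam.
  assert (p2 := J2_pos nu a u v Hv Hvu Hu).
  assert (d := is_derive_div _ _ u _ _ (is_derive_J_u nu a u v ltac:(lra) ltac:(lra))
    (is_derive_J2_u nu a u v ltac:(lra) ltac:(lra)) ltac:(lra)).
  eapply is_derive_replace.
  - apply (is_derive_minus (fun u => a + u + v + 2 * nu) (fun u => J nu a u v / J2 nu a u v)); [|exact d].
    auto_derive; [exact I | reflexivity].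
  - change (1 - (J2 nu a u v * J2 nu a u v - J nu a u v * J22 nu a u v) / (J2 nu a u v ^ 2) =
      J nu a u v * J22 nu a u v / (J2 nu a u v * J2 nu a u v)).
    field. lra.
Qed.

Lemma Lam_lt_top : Lam nu a v u < 2 * a + v + 2 * nu.
Proof.
  unfold Lam. assert (p1 := J_pos nu a u v Hv Hvu Hu). assert (p2 := J2_pos nu a u v Hv Hvu Hu).
  assert (0 < J nu a u v / J2 nu a u v) by (apply Rdiv_lt_0_compat; lra). lra.
Qed.

End Lambda.

Section NearTop.

Variables nu a v u1 : R.
Hypotheses (Hv : -nu < v) (Hu1 : v < u1 < a).

Let A := a + nu.
Let K := 1 + (a - v).
Let c1 := sqrt A / (2 * K * sqrt K).

Let hA : 0 < A. Proof. unfold A; lra. Qed.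
Let hK : 0 < K. Proof. unfold K; lra. Qed.
Let hc1 : 0 < c1.
Proof.
  assert (sA := sqrt_lt_R0 A hA). assert (sK := sqrt_lt_R0 K hK).
  unfold c1. apply Rdiv_lt_0_compat; [lra | repeat apply Rmult_lt_0_compat; lra].
Qed.

Let J2_lower_c1 ep : 0 < ep -> ep <= 1 / 4 -> a - ep > v -> c1 / ep <= J2 nu a (a - ep) v.
Proof.
  intros hep hep4 hv. assert (L := J2_lower nu a (a - ep) v Hv ltac:(lra) ltac:(lra) ltac:(lra)).
  assert (sA := sqrt_lt_R0 A hA). assert (sK := sqrt_lt_R0 K hK).
  replace (a - (a - ep)) with ep in L by ring. fold A K in L.
  replace (c1 / ep) with (sqrt A / (2 * K * sqrt K * ep)) by (unfold c1; field; repeat split; lra).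
  exact L.
Qed.

Lemma J3_lt_J2_near_top : exists w, u1 < w < a /\ J3 nu a w v < J2 nu a w v.
Proof.
  pose proof PI_RGT_0.
  assert (sb := sqrt_lt_R0 (v + nu) ltac:(lra)).
  set (c2 := PI / 2 * (A / (sqrt (v + nu) * (u1 - v)))).
  assert (hc2 : 0 < c2)
    by (unfold c2; apply Rmult_lt_0_compat; [lra | apply Rdiv_lt_0_compat; [|apply Rmult_lt_0_compat]; lra]).
  set (r := c1 / (2 * c2)).
  assert (hr : 0 < r) by (unfold r; apply Rdiv_lt_0_compat; lra).
  set (ep := Rmin (Rmin ((a - u1) / 2) (1 / 4)) (r * r)).
  assert (m1 := Rmin_l (Rmin ((a - u1) / 2) (1 / 4)) (r * r)).
  assert (m2 := Rmin_r (Rmin ((a - u1) / 2) (1 / 4)) (r * r)).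
  assert (m3 := Rmin_l ((a - u1) / 2) (1 / 4)). assert (m4 := Rmin_r ((a - u1) / 2) (1 / 4)).
  fold ep in m1, m2.
  assert (hep : 0 < ep) by (unfold ep; apply Rmin_glb_lt; [apply Rmin_glb_lt|]; nra).
  exists (a - ep). split; [lra|].
  assert (L := J2_lower_c1 ep hep ltac:(lra) ltac:(lra)).
  assert (U := J3_upper nu a (a - ep) v Hv ltac:(lra) ltac:(lra)).
  replace (a - (a - ep)) with ep in U by ring. fold A in U.
  set (se := sqrt ep) in *.
  assert (hse : 0 < se) by (apply sqrt_lt_R0; lra).
  assert (see : se * se = ep) by (apply sqrt_sqrt; lra).
  assert (hse2 : se <= r) by (unfold se; rewrite <- (sqrt_square r) by lra; apply sqrt_le_1; nra).
  assert (U2 : J3 nu a (a - ep) v <= c2 / se).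
  { eapply Rle_trans; [apply U|].
    replace (c2 / se) with (PI / 2 * (A / (sqrt (v + nu) * (u1 - v) * se)))
      by (unfold c2; field; repeat split; lra).
    apply Rmult_le_compat_l; [lra|].
    apply Rdiv_le_cross; [repeat apply Rmult_lt_0_compat; lra .. |].
    apply Rmult_le_compat_l; [lra|]. apply Rmult_le_compat_r; [lra|].
    apply Rmult_le_compat_l; lra. }
  assert (c2 / se < c1 / ep).
  { rewrite <- see. apply Rmult_lt_reg_r with (se * se); [nra|].
    replace (c2 / se * (se * se)) with (c2 * se) by (field; lra).
    replace (c1 / (se * se) * (se * se)) with c1 by (field; lra).
    assert (c2 * se <= c2 * r) by (apply Rmult_le_compat_l; lra).
    assert (c2 * r = c1 / 2) by (unfold r; field; lra). lra. }
  lra.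
Qed.

Lemma Lam_gt_near_top xi : xi < 2 * a + v + 2 * nu -> exists w, u1 < w < a /\ xi < Lam nu a v w.
Proof.
  intros hxi. pose proof PI_RGT_0.
  set (g := 2 * a + v + 2 * nu - xi).
  assert (hg : 0 < g) by (unfold g; lra).
  set (dd := Rmin (g / 16) ((u1 - v) / 2)).
  assert (n1 := Rmin_l (g / 16) ((u1 - v) / 2)). assert (n2 := Rmin_r (g / 16) ((u1 - v) / 2)).
  fold dd in n1, n2.
  assert (hdd : 0 < dd) by (unfold dd; apply Rmin_glb_lt; lra).
  assert (sd := sqrt_lt_R0 dd hdd). assert (sA := sqrt_lt_R0 A hA).
  set (Cd := 1 * (PI / 2 * (2 * sqrt A / sqrt dd))).
  assert (hCd : 0 < Cd)
    by (unfold Cd; rewrite Rmult_1_l; apply Rmult_lt_0_compat; [lra | apply Rdiv_lt_0_compat; lra]).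
  assert (hq : 0 < g * c1 / (4 * Cd)) by (apply Rdiv_lt_0_compat; nra).
  set (ep := Rmin (Rmin ((a - u1) / 2) (1 / 4)) (Rmin (g / 4) (g * c1 / (4 * Cd)))).
  assert (m1 := Rmin_l (Rmin ((a - u1) / 2) (1 / 4)) (Rmin (g / 4) (g * c1 / (4 * Cd)))).
  assert (m2 := Rmin_r (Rmin ((a - u1) / 2) (1 / 4)) (Rmin (g / 4) (g * c1 / (4 * Cd)))).
  assert (m3 := Rmin_l ((a - u1) / 2) (1 / 4)). assert (m4 := Rmin_r ((a - u1) / 2) (1 / 4)).
  assert (m5 := Rmin_l (g / 4) (g * c1 / (4 * Cd))). assert (m6 := Rmin_r (g / 4) (g * c1 / (4 * Cd))).
  fold ep in m1, m2.
  assert (hep : 0 < ep) by (unfold ep; apply Rmin_glb_lt; apply Rmin_glb_lt; lra).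
  exists (a - ep). split; [lra|].
  assert (L := J2_lower_c1 ep hep ltac:(lra) ltac:(lra)).
  assert (U := J_upper nu a (a - ep) v Hv ltac:(lra) ltac:(lra) dd hdd ltac:(lra)).
  fold A Cd in U.
  assert (pJ := J_pos nu a (a - ep) v Hv ltac:(lra) ltac:(lra)).
  assert (pJ2 := J2_pos nu a (a - ep) v Hv ltac:(lra) ltac:(lra)).
  assert (R1 : J nu a (a - ep) v / J2 nu a (a - ep) v <= 4 * dd + Cd / J2 nu a (a - ep) v).
  { apply Rmult_le_reg_r with (J2 nu a (a - ep) v); [lra|].
    replace (J nu a (a - ep) v / J2 nu a (a - ep) v * J2 nu a (a - ep) v) with (J nu a (a - ep) v)
      by (field; lra).
    replace ((4 * dd + Cd / J2 nu a (a - ep) v) * J2 nu a (a - ep) v)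
      with (4 * dd * J2 nu a (a - ep) v + Cd) by (field; lra).
    lra. }
  assert (R2 : Cd / J2 nu a (a - ep) v <= Cd * ep / c1).
  { apply Rdiv_le_cross; [lra | lra|].
    assert (Cd * (c1 / ep) <= Cd * J2 nu a (a - ep) v) by (apply Rmult_le_compat_l; lra).
    replace (Cd * c1) with (Cd * (c1 / ep) * ep) by (field; lra). nra. }
  assert (R3 : Cd * ep / c1 <= g / 4).
  { apply Rmult_le_reg_r with c1; [lra|]. replace (Cd * ep / c1 * c1) with (Cd * ep) by (field; lra).
    assert (Cd * ep <= Cd * (g * c1 / (4 * Cd))) by (apply Rmult_le_compat_l; lra).
    replace (Cd * (g * c1 / (4 * Cd))) with (g / 4 * c1) in H0 by (field; lra). lra. }
  unfold Lam, g in *. lra.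
Qed.

End NearTop.

Section Inversion.

Variables nu a b ustar : R.
Hypotheses (Hb : -nu < b) (Hthr : 4 * (b + nu) < a + nu) (Hus : b < ustar < a)
  (Heq : lambda2 nu a ustar b = lambda3 nu a ustar b)
  (Huniq : forall u, b < u < a -> lambda2 nu a u b = lambda3 nu a u b -> u = ustar).

(* [J2 - J3] vanishes in [(b, a)] only at [ustar] and is positive somewhere between any
   [u > ustar] and [a], so by the intermediate value theorem it cannot be negative above [ustar]. *)
Lemma J3_le_J2_above u : ustar <= u < a -> J3 nu a u b <= J2 nu a u b.
Proof.
  intros Hu. destruct (Req_dec u ustar) as [->|Hne].
  { apply lambda2_eq_lambda3_iff in Heq; lra. }
  destruct (Rle_lt_dec (J3 nu a u b) (J2 nu a u b)) as [P|P]; auto. exfalso.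
  destruct (J3_lt_J2_near_top nu a b u Hb ltac:(lra)) as [w [Hw Hwp]].
  destruct (Ranalysis5.IVT_interv (fun z => J2 nu a z b - J3 nu a z b) u w) as [z [Hz Hz0]];
    [| lra | lra | lra |].
  - intros y Hy. apply continuity_pt_minus.
    + eapply is_derive_continuity_pt, is_derive_J2_u; lra.
    + destruct (ex_derive_J3_u nu a y b ltac:(lra) ltac:(lra)) as [l Hl].
      eapply is_derive_continuity_pt, Hl.
  - assert (z = ustar) by (apply Huniq; [lra | apply lambda2_eq_lambda3_iff; lra]). lra.
Qed.

Lemma Lam_increasing_above p q : ustar <= p -> p < q -> q < a -> Lam nu a b p < Lam nu a b q.
Proof.
  intros hp hpq hq.
  destruct (MVT_gen (Lam nu a b) p q (fun u => J nu a u b * J22 nu a u b / (J2 nu a u b * J2 nu a u b)))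
    as [c [Hc E]]; rewrite ?Rmin_left, ?Rmax_right in * by lra.
  - intros x Hx. apply is_derive_Lam; lra.
  - intros x Hx. eapply is_derive_continuity_pt, is_derive_Lam; lra.
  - assert (p1 := J_pos nu a c b Hb ltac:(lra) ltac:(lra)).
    assert (p2 := J2_pos nu a c b Hb ltac:(lra) ltac:(lra)).
    assert (p3 : 0 < J22 nu a c b).
    { apply J22_pos_of_Jsc_nonneg; try lra.
      assert (X := J2_sub_J3 nu a c b Hb ltac:(lra) ltac:(lra)).
      assert (J3 nu a c b <= J2 nu a c b) by (apply J3_le_J2_above; lra).
      destruct (Rle_lt_dec 0 (Jsc nu a c b)); auto. nra. }
    assert (0 < J nu a c b * J22 nu a c b / (J2 nu a c b * J2 nu a c b)) by (apply Rdiv_lt_0_compat; nra).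
    nra.
Qed.

Lemma lambda2e_top : lambda2e nu a a b = 2 * a + b + 2 * nu.
Proof. unfold lambda2e. destruct (Req_EM_T a a); [reflexivity | congruence]. Qed.

Lemma lambda2e_eq_Lam u : b < u < a -> lambda2e nu a u b = Lam nu a b u.
Proof. intros Hu. unfold lambda2e. destruct (Req_EM_T u a); [lra | apply lambda2_eq_Lam; lra]. Qed.

Lemma lambda2e_increasing p q : ustar <= p -> p < q -> q <= a -> lambda2e nu a p b < lambda2e nu a q b.
Proof.
  intros hp hpq hq. rewrite (lambda2e_eq_Lam p) by lra.
  destruct (Req_dec q a) as [->|Hne].
  - rewrite lambda2e_top. apply Lam_lt_top; lra.
  - rewrite (lambda2e_eq_Lam q) by lra. apply Lam_increasing_above; lra.
Qed.

Lemma lambda2e_onto xi : lambda2 nu a ustar b <= xi <= 2 * a + b + 2 * nu ->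
  exists u, ustar <= u <= a /\ lambda2e nu a u b = xi.
Proof.
  intros [hx1 hx2]. rewrite lambda2_eq_Lam in hx1 by lra.
  destruct (Req_dec xi (2 * a + b + 2 * nu)) as [->|E].
  { exists a. split; [lra | apply lambda2e_top]. }
  destruct (Lam_gt_near_top nu a b ustar Hb ltac:(lra) xi ltac:(lra)) as [w [Hw Hwx]].
  destruct (Req_dec xi (Lam nu a b ustar)) as [->|E2].
  { exists ustar. split; [lra | apply lambda2e_eq_Lam; lra]. }
  destruct (Ranalysis5.IVT_interv (fun u => Lam nu a b u - xi) ustar w) as [z [Hz Hz0]];
    [| lra | lra | lra |].
  - intros y Hy. apply continuity_pt_minus; [|apply continuity_pt_const; intros ??; reflexivity].
    eapply is_derive_continuity_pt, is_derive_Lam; lra.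
  - exists z. split; [lra|]. rewrite lambda2e_eq_Lam by lra. lra.
Qed.

End Inversion.

Theorem lemma4p6 (nu a b ustar : R)
  (Hb : 0 < b + nu) (Hba : b + nu < (a + nu) / 4)
  (Hus : b < ustar < a)
  (Heq : lambda2 nu a ustar b = lambda3 nu a ustar b)
  (Huniq : forall u, b < u < a -> lambda2 nu a u b = lambda3 nu a u b -> u = ustar) :
  let alpha := lambda2 nu a ustar b in
  exists g : R -> R,
    (forall xi, alpha <= xi <= 2 * a + b + 2 * nu ->
       ustar <= g xi <= a /\ lambda2e nu a (g xi) b = xi /\
       (forall u2, ustar <= u2 <= a -> lambda2e nu a u2 b = xi -> u2 = g xi)) /\
    (forall xi1 xi2, alpha <= xi1 -> xi1 < xi2 -> xi2 <= 2 * a + b + 2 * nu ->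
       g xi1 < g xi2).
Proof.
  intros alpha. apply (increasing_onto_inverse (fun u => lambda2e nu a u b)).
  - intros p q. apply lambda2e_increasing; auto; lra.
  - intros xi. apply lambda2e_onto; auto; lra.
Qed.
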